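(* The evaluation relation $\succ^*$ on term distributions satisfies: (1) $\vec 0\succ^*\vec 0$; (2) if $\vec t\succ^*\vec t'$ then $\alpha\cdot\vec t\succ^*\alpha\cdot\vec t'$ for all $\alpha\in\mathbb C$; (3) if $\vec t_1\succ^*\vec t'_1$ and $\vec t_2\succ^*\vec t'_2$ then $\vec t_1+\vec t_2\succ^*\vec t'_1+\vec t'_2$.
   Context: Calculus. Pure values: $v,w::=x\mid\lambda x.\vec{s}\mid *\mid (v_1,v_2)\mid \mathtt{inl}(v)\mid\mathtt{inr}(v)$. Pure terms: $s,t::=v\mid s\,t\mid t;\vec{s}\mid \mathtt{let}\,(x_1,x_2)=t\,\mathtt{in}\,\vec{s}\mid \mathtt{match}\,t\,\{\mathtt{inl}\,x_1\mapsto\vec{s}_1\mid\mathtt{inr}\,x_2\mapsto\vec{s}_2\}$. Term distributions $\vec{t}::=\vec{0}\mid t\mid \vec{s}+\vec{t}\mid\alpha\cdot\vec{t}$ ($\alpha\in\mathbb{C}$), with top-level equality modulo the weak-vector-space congruence (commutative monoid for $+,\vec0$; $1\cdot\vec t=\vec t$; $\alpha\cdot(\beta\cdot\vec t)=\alpha\beta\cdot\vec t$; both distributivity laws), not acting inside pure terms; $0\cdot t\neq\vec0$. Constructs extended by linearity. Atomic evaluation $\triangleright$ (pure term to distribution) is the call-by-value relation: $(\lambda x.\vec t)\,v\triangleright\vec t[x:=v]$; $*;\vec s\triangleright\vec s$; $\mathtt{let}\,(x,y)=(v,w)\,\mathtt{in}\,\vec s\triangleright\vec s[x:=v,y:=w]$;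 $\mathtt{match}\,\mathtt{inl}(v)\{\ldots\}\triangleright\vec s_1[x_1:=v]$, $\mathtt{match}\,\mathtt{inr}(v)\{\ldots\}\triangleright\vec s_2[x_2:=v]$; and if $t\triangleright\vec t'$ then $s\,t\triangleright s\,\vec t'$, $t\,v\triangleright\vec t'\,v$, and reduction in the scrutinee of $;$, let, match. One-step evaluation: $\vec t\succ\vec t'$ iff $\vec t=\alpha\cdot s+\vec r$, $\vec t'=\alpha\cdot\vec s'+\vec r$ with $s\triangleright\vec s'$. $\succ^*$ is the reflexive-transitive closure of $\succ$. *)

From Stdlib Require Import Reals.
From Coquelicot Require Import Coquelicot.
Local Open Scope nat_scope.

(* Variables are de Bruijn indices.
   - lambda binds one variable (index 0 in the body);
   - let (x1,x2) = t in body binds two: x2 is index 0 and x1 is index 1;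
   - each match branch binds one variable (index 0). *)

Inductive value : Type :=
  | VVar  : nat -> value
  | VLam  : tdist -> value
  | VUnit : value
  | VPair : value -> value -> value
  | VInl  : value -> value
  | VInr  : value -> value
with term : Type :=
  | TVal   : value -> term
  | TApp   : term -> term -> term
  | TSeq   : term -> tdist -> term
  | TLet   : term -> tdist -> term
  | TMatch : term -> tdist -> tdist -> term
with tdist : Type :=
  | DZero  : tdist
  | DTerm  : term -> tdist
  | DPlus  : tdist -> tdist -> tdist
  | DScale : C -> tdist -> tdist.

Definition upren (r : nat -> nat) : nat -> nat :=
  fun n => match n with 0 => 0 | S m => S (r m) end.

Fixpoint ren_v (r : nat -> nat) (v : value) {struct v} : value :=
  match v with
  | VVar n => VVar (r n)
  | VLam d => VLam (ren_d (upren r) d)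
  | VUnit => VUnit
  | VPair a b => VPair (ren_v r a) (ren_v r b)
  | VInl a => VInl (ren_v r a)
  | VInr a => VInr (ren_v r a)
  end
with ren_t (r : nat -> nat) (t : term) {struct t} : term :=
  match t with
  | TVal v => TVal (ren_v r v)
  | TApp s u => TApp (ren_t r s) (ren_t r u)
  | TSeq u d => TSeq (ren_t r u) (ren_d r d)
  | TLet u d => TLet (ren_t r u) (ren_d (upren (upren r)) d)
  | TMatch u d1 d2 => TMatch (ren_t r u) (ren_d (upren r) d1) (ren_d (upren r) d2)
  end
with ren_d (r : nat -> nat) (d : tdist) {struct d} : tdist :=
  match d with
  | DZero => DZero
  | DTerm t => DTerm (ren_t r t)
  | DPlus a b => DPlus (ren_d r a) (ren_d r b)
  | DScale a e => DScale a (ren_d r e)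
  end.

Definition up (s : nat -> value) : nat -> value :=
  fun n => match n with 0 => VVar 0 | S m => ren_v S (s m) end.

Fixpoint subst_v (s : nat -> value) (v : value) {struct v} : value :=
  match v with
  | VVar n => s n
  | VLam d => VLam (subst_d (up s) d)
  | VUnit => VUnit
  | VPair a b => VPair (subst_v s a) (subst_v s b)
  | VInl a => VInl (subst_v s a)
  | VInr a => VInr (subst_v s a)
  end
with subst_t (s : nat -> value) (t : term) {struct t} : term :=
  match t with
  | TVal v => TVal (subst_v s v)
  | TApp a b => TApp (subst_t s a) (subst_t s b)
  | TSeq u d => TSeq (subst_t s u) (subst_d s d)
  | TLet u d => TLet (subst_t s u) (subst_d (up (up s)) d)
  | TMatch u d1 d2 => TMatch (subst_t s u) (subst_d (up s) d1) (subst_d (up s) d2)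
  end
with subst_d (s : nat -> value) (d : tdist) {struct d} : tdist :=
  match d with
  | DZero => DZero
  | DTerm t => DTerm (subst_t s t)
  | DPlus a b => DPlus (subst_d s a) (subst_d s b)
  | DScale a e => DScale a (subst_d s e)
  end.

Definition subst1 (v : value) : nat -> value :=
  fun n => match n with 0 => v | S m => VVar m end.
Definition subst2 (v w : value) : nat -> value :=
  fun n => match n with 0 => w | 1 => v | S (S m) => VVar m end.

Fixpoint lin (f : term -> term) (d : tdist) : tdist :=
  match d with
  | DZero => DZero
  | DTerm t => DTerm (f t)
  | DPlus a b => DPlus (lin f a) (lin f b)
  | DScale a e => DScale a (lin f e)
  end.

(* Top-level equality of distributions: weak vector space congruence
   (does not act inside pure terms; 0 . t is NOT identified with 0). *)
Inductive deq : tdist -> tdist -> Prop :=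
  | deq_refl  : forall d, deq d d
  | deq_sym   : forall d e, deq d e -> deq e d
  | deq_trans : forall d e f, deq d e -> deq e f -> deq d f
  | deq_plus  : forall d d' e e', deq d d' -> deq e e' -> deq (DPlus d e) (DPlus d' e')
  | deq_scale : forall a d d', deq d d' -> deq (DScale a d) (DScale a d')
  | deq_comm  : forall d e, deq (DPlus d e) (DPlus e d)
  | deq_assoc : forall d e f, deq (DPlus (DPlus d e) f) (DPlus d (DPlus e f))
  | deq_zero  : forall d, deq (DPlus DZero d) d
  | deq_one   : forall d, deq (DScale (RtoC 1%R) d) d
  | deq_scale_scale : forall a b d, deq (DScale a (DScale b d)) (DScale (a * b)%C d)
  | deq_distr_l : forall a d e, deq (DScale a (DPlus d e)) (DPlus (DScale a d) (DScale a e))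
  | deq_distr_r : forall a b d, deq (DScale (a + b)%C d) (DPlus (DScale a d) (DScale b d)).

Inductive atomic : term -> tdist -> Prop :=
  | at_beta : forall d v,
      atomic (TApp (TVal (VLam d)) (TVal v)) (subst_d (subst1 v) d)
  | at_seq : forall d, atomic (TSeq (TVal VUnit) d) d
  | at_let : forall v w d,
      atomic (TLet (TVal (VPair v w)) d) (subst_d (subst2 v w) d)
  | at_inl : forall v d1 d2,
      atomic (TMatch (TVal (VInl v)) d1 d2) (subst_d (subst1 v) d1)
  | at_inr : forall v d1 d2,
      atomic (TMatch (TVal (VInr v)) d1 d2) (subst_d (subst1 v) d2)
  | at_app_r : forall s t d, atomic t d -> atomic (TApp s t) (lin (TApp s) d)
  | at_app_l : forall t v d, atomic t d ->
      atomic (TApp t (TVal v)) (lin (fun u => TApp u (TVal v)) d)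
  | at_seq_ctx : forall t e d, atomic t d ->
      atomic (TSeq t e) (lin (fun u => TSeq u e) d)
  | at_let_ctx : forall t e d, atomic t d ->
      atomic (TLet t e) (lin (fun u => TLet u e) d)
  | at_match_ctx : forall t e1 e2 d, atomic t d ->
      atomic (TMatch t e1 e2) (lin (fun u => TMatch u e1 e2) d).

Definition step (d d' : tdist) : Prop :=
  exists (a : C) (s : term) (s' r : tdist),
    deq d (DPlus (DScale a (DTerm s)) r) /\
    deq d' (DPlus (DScale a s') r) /\
    atomic s s'.

Inductive steps : tdist -> tdist -> Prop :=
  | steps_refl : forall d d', deq d d' -> steps d d'
  | steps_step : forall d d' d'', step d d' -> steps d' d'' -> steps d d''.

From Stdlib Require Import Reals.
From Coquelicot Require Import Coquelicot.

(* A one-step redex decomposition [a . s + r] of [d] yields the decomposition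
   [(c a) . s + c . r] of [c . d] and [a . s + (r + e)] of [d + e], so single steps
   are closed under scaling and under adding a context on either side; the closure
   properties of [steps] follow by induction, reducing a sum left summand first. *)

Lemma steps_deq_l (d e f : tdist) : deq d e -> steps e f -> steps d f.
Proof.
  intros Hde Hef. destruct Hef as [e f Hef | e e' f [a [s [s' [r [Hdec [Hdec' Hat]]]]]] Hrest].
  - apply steps_refl. eapply deq_trans; eauto.
  - apply steps_step with e'; [|exact Hrest].
    exists a, s, s', r. split; [eapply deq_trans; eauto | auto].
Qed.

Lemma steps_trans (d e f : tdist) : steps d e -> steps e f -> steps d f.
Proof.
  intros Hde. induction Hde as [d e Hde | d d' e Hstep Hrest IH]; intros Hef.
  - eapply steps_deq_l; eauto.
  - eapply steps_step; eauto.
Qed.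

Lemma deq_scale_redex (c a : C) (s r : tdist) :
  deq (DScale c (DPlus (DScale a s) r)) (DPlus (DScale (c * a) s) (DScale c r)).
Proof.
  eapply deq_trans; [apply deq_distr_l |].
  apply deq_plus; [apply deq_scale_scale | apply deq_refl].
Qed.

Lemma step_scale (c : C) (d d' : tdist) : step d d' -> step (DScale c d) (DScale c d').
Proof.
  intros [a [s [s' [r [Hdec [Hdec' Hat]]]]]].
  exists (c * a)%C, s, s', (DScale c r). split; [|split; [|exact Hat]].
  - eapply deq_trans; [apply deq_scale, Hdec | apply deq_scale_redex].
  - eapply deq_trans; [apply deq_scale, Hdec' | apply deq_scale_redex].
Qed.

Lemma step_plus_l (d d' e : tdist) : step d d' -> step (DPlus d e) (DPlus d' e).
Proof.
  intros [a [s [s' [r [Hdec [Hdec' Hat]]]]]].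
  exists a, s, s', (DPlus r e). split; [|split; [|exact Hat]].
  - eapply deq_trans; [apply deq_plus; [exact Hdec | apply deq_refl] | apply deq_assoc].
  - eapply deq_trans; [apply deq_plus; [exact Hdec' | apply deq_refl] | apply deq_assoc].
Qed.

Lemma steps_scale (c : C) (d d' : tdist) : steps d d' -> steps (DScale c d) (DScale c d').
Proof.
  intros Hdd'. induction Hdd' as [d d' Hdd' | d d' d'' Hstep Hrest IH].
  - apply steps_refl, deq_scale, Hdd'.
  - apply steps_step with (DScale c d'); [apply step_scale |]; assumption.
Qed.

Lemma steps_plus_l (d d' e : tdist) : steps d d' -> steps (DPlus d e) (DPlus d' e).
Proof.
  intros Hdd'. induction Hdd' as [d d' Hdd' | d d' d'' Hstep Hrest IH].
  - apply steps_refl, deq_plus; [exact Hdd' | apply deq_refl].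
  - apply steps_step with (DPlus d' e); [apply step_plus_l |]; assumption.
Qed.

Lemma steps_plus_r (d e e' : tdist) : steps e e' -> steps (DPlus d e) (DPlus d e').
Proof.
  intros Hee'.
  apply steps_deq_l with (DPlus e d); [apply deq_comm |].
  apply steps_trans with (DPlus e' d); [apply steps_plus_l, Hee' |].
  apply steps_refl, deq_comm.
Qed.

Lemma steps_plus (d d' e e' : tdist) :
  steps d d' -> steps e e' -> steps (DPlus d e) (DPlus d' e').
Proof.
  intros Hdd' Hee'.
  apply steps_trans with (DPlus d' e); [apply steps_plus_l | apply steps_plus_r]; assumption.
Qed.

Theorem mainTheorem9 :
  steps DZero DZero /\
  (forall (a : C) (t t' : tdist), steps t t' -> steps (DScale a t) (DScale a t')) /\
  (forall t1 t1' t2 t2' : tdist,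
      steps t1 t1' -> steps t2 t2' -> steps (DPlus t1 t2) (DPlus t1' t2')).
Proof.
  split; [apply steps_refl, deq_refl | split].
  - exact steps_scale.
  - exact steps_plus.
Qed.
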